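(* For every $d\ge1$, $\mathsf{L}(\mathcal{A}^d)\le10^d$.
   Context: $\mathcal{A}:\{0,1\}^4\to\{0,1\}$ is the function with $\mathcal{A}(x)=1$ iff $x_1\le x_2\le x_3\le x_4$ or $x_1\ge x_2\ge x_3\ge x_4$. For $f:\{0,1\}^n\to\{0,1\}$, its $d$th iteration $f^d:\{0,1\}^{n^d}\to\{0,1\}$ is defined by $f^1=f$ and $f^{d+1}(x)=f\big(f^d(x_1,\dots,x_{n^d}),\ \dots,\ f^d(x_{(n-1)n^d+1},\dots,x_{n^{d+1}})\big)$, the $j$th argument being $f^d$ applied to the $j$th consecutive block of $n^d$ bits. $\mathsf{L}(f)$ is the minimum number of leaves of a formula (binary tree with internal nodes labeled $\wedge,\vee$ and leaves labeled by literals $x_i,\neg x_i$) computing $f$. *)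

From mathcomp Require Import all_boot.
Set Implicit Arguments. Unset Strict Implicit. Unset Printing Implicit Defensive.

(* Boolean functions: an input of length m is an assignment x : nat -> bool,
   of which only x 0, ..., x (m-1) are meant to be used (0-indexed bits:
   paper's x_{i+1} is x i here). *)

(* The function A : {0,1}^4 -> {0,1}:
   A(x) = 1 iff x1 <= x2 <= x3 <= x4 or x1 >= x2 >= x3 >= x4
   (on bits, a <= b is a ==> b). *)
Definition bA (x : nat -> bool) : bool :=
  [&& x 0 ==> x 1, x 1 ==> x 2 & x 2 ==> x 3] ||
  [&& x 1 ==> x 0, x 2 ==> x 1 & x 3 ==> x 2].

(* d-th iteration of f : {0,1}^n -> {0,1}:  f^0 is the projection to the
   first bit (so f^1 = f(x_0,...,x_{n-1}) = f), and
   f^(d+1)(x) = f(f^d(block_0), ..., f^d(block_{n-1})), where block_j is the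
   j-th consecutive block of n^d bits. *)
Fixpoint iter_bf (n : nat) (f : (nat -> bool) -> bool) (d : nat)
  (x : nat -> bool) : bool :=
  match d with
  | 0 => x 0
  | d'.+1 => f (fun j => iter_bf n f d' (fun i => x (j * n ^ d' + i)))
  end.

(* De Morgan formulas: binary trees with internal nodes AND / OR and leaves
   literals x_i (Lit i true) or ~x_i (Lit i false). *)
Inductive formula : Type :=
| Lit of nat & bool
| FAnd of formula & formula
| FOr of formula & formula.

Fixpoint feval (F : formula) (x : nat -> bool) : bool :=
  match F with
  | Lit i b => if b then x i else ~~ x i
  | FAnd F G => feval F x && feval G x
  | FOr F G => feval F x || feval G x
  end.

Fixpoint leaves (F : formula) : nat :=
  match F with
  | Lit _ _ => 1
  | FAnd F G => leaves F + leaves G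
  | FOr F G => leaves F + leaves G
  end.

Fixpoint vars_below (m : nat) (F : formula) : bool :=
  match F with
  | Lit i _ => i < m
  | FAnd F G => vars_below m F && vars_below m G
  | FOr F G => vars_below m F && vars_below m G
  end.

Definition computes (m : nat) (f : (nat -> bool) -> bool) (F : formula) : Prop :=
  vars_below m F /\ forall x : nat -> bool, feval F x = f x.

Definition L_le (m : nat) (f : (nat -> bool) -> bool) (k : nat) : Prop :=
  exists F : formula, computes m f F /\ leaves F <= k.

From mathcomp Require Import all_boot.
Set Implicit Arguments. Unset Strict Implicit. Unset Printing Implicit Defensive.

(* A has a De Morgan formula with 10 leaves. Substituting, for each literal
   x_j / ~x_j of a formula for f, a copy (resp. its De Morgan dual, which has
   the same size) of a formula for g on the j-th block of variables yields a
   formula for the block composition whose size is the product of the two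
   sizes; iterating gives L(A^d) <= 10^d. *)

Fixpoint fneg (F : formula) : formula :=
  match F with
  | Lit i b => Lit i (~~ b)
  | FAnd F G => FOr (fneg F) (fneg G)
  | FOr F G => FAnd (fneg F) (fneg G)
  end.

Fixpoint fshift (k : nat) (F : formula) : formula :=
  match F with
  | Lit i b => Lit (k + i) b
  | FAnd F G => FAnd (fshift k F) (fshift k G)
  | FOr F G => FOr (fshift k F) (fshift k G)
  end.

Fixpoint fsubst (F : formula) (H : nat -> formula) : formula :=
  match F with
  | Lit j b => if b then H j else fneg (H j)
  | FAnd F G => FAnd (fsubst F H) (fsubst G H)
  | FOr F G => FOr (fsubst F H) (fsubst G H)
  end.

Lemma feval_ext F x y : x =1 y -> feval F x = feval F y.
Proof. by move=> exy; elim: F => [i b|F IF G IG|F IF G IG] /=; rewrite ?exy ?IF ?IG. Qed.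

Lemma feval_neg F x : feval (fneg F) x = ~~ feval F x.
Proof.
elim: F => [i b|F IF G IG|F IF G IG] /=.
- by case: b; rewrite ?negbK.
- by rewrite IF IG negb_and.
- by rewrite IF IG negb_or.
Qed.

Lemma leaves_neg F : leaves (fneg F) = leaves F.
Proof. by elim: F => //= F -> G ->. Qed.

Lemma vars_below_neg m F : vars_below m (fneg F) = vars_below m F.
Proof. by elim: F => //= F -> G ->. Qed.

Lemma feval_shift k F x : feval (fshift k F) x = feval F (fun i => x (k + i)).
Proof. by elim: F => //= F -> G ->. Qed.

Lemma leaves_shift k F : leaves (fshift k F) = leaves F.
Proof. by elim: F => //= F -> G ->. Qed.

Lemma vars_below_shift k m F :
  vars_below m F -> vars_below (k + m) (fshift k F).
Proof.
elim: F => [i b|F IF G IG|F IF G IG] /=; first by rewrite ltn_add2l.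
- by case/andP => /IF -> /IG ->.
- by case/andP => /IF -> /IG ->.
Qed.

Lemma vars_below_leq m m' F : m <= m' -> vars_below m F -> vars_below m' F.
Proof.
move=> le_mm'; elim: F => [i b|F IF G IG|F IF G IG] /=.
- by move=> /leq_trans; apply.
- by case/andP => /IF -> /IG ->.
- by case/andP => /IF -> /IG ->.
Qed.

Lemma feval_subst F H x :
  feval (fsubst F H) x = feval F (fun j => feval (H j) x).
Proof.
elim: F => [j b|F IF G IG|F IF G IG] /=; last by rewrite IF IG.
- by case: b; rewrite ?feval_neg.
- by rewrite IF IG.
Qed.

Lemma leaves_subst F H k : (forall j, leaves (H j) = k) ->
  leaves (fsubst F H) = leaves F * k.
Proof.
move=> leavesH; elim: F => [j b|F IF G IG|F IF G IG] /=.
- by case: b; rewrite ?leaves_neg leavesH mul1n.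
- by rewrite IF IG mulnDl.
- by rewrite IF IG mulnDl.
Qed.

Lemma vars_below_subst n m F H : vars_below n F ->
  (forall j, j < n -> vars_below m (H j)) -> vars_below m (fsubst F H).
Proof.
move=> + varsH; elim: F => [j b|F IF G IG|F IF G IG] /=.
- by move=> /varsH; case: b; rewrite ?vars_below_neg.
- by case/andP => /IF -> /IG ->.
- by case/andP => /IF -> /IG ->.
Qed.

Definition block_compose (n : nat) (f : (nat -> bool) -> bool)
  (m : nat) (g : (nat -> bool) -> bool) (x : nat -> bool) : bool :=
  f (fun j => g (fun i => x (j * m + i))).

Lemma L_le_block_compose n f s m g k :
  L_le n f s -> L_le m g k -> L_le (n * m) (block_compose n f m g) (s * k).
Proof.
move=> [F [[varsF evalF] leavesF]] [G [[varsG evalG] leavesG]].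
exists (fsubst F (fun j => fshift (j * m) G)); split; first split.
- apply: (vars_below_subst varsF) => j lt_jn.
  apply: (@vars_below_leq (j * m + m)); last exact: vars_below_shift.
  by rewrite -mulSnr leq_mul2r lt_jn orbT.
- move=> x; rewrite feval_subst /block_compose -evalF; apply: feval_ext => j.
  by rewrite feval_shift evalG.
- by rewrite (@leaves_subst _ _ (leaves G)) ?leq_mul // => j; rewrite leaves_shift.
Qed.

Lemma L_le_iter n f s d : L_le n f s -> L_le (n ^ d) (iter_bf n f d) (s ^ d).
Proof.
move=> Lf; elim: d => [|d IHd]; first by exists (Lit 0 true).
by rewrite !expnS; exact: L_le_block_compose Lf IHd.
Qed.

Definition formula_A : formula :=
  FOr (FAnd (Lit 0 true) (FAnd (Lit 1 true) (Lit 2 true)))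
      (FAnd (FOr (Lit 0 false) (Lit 3 false))
            (FOr (FAnd (Lit 2 true) (Lit 3 true))
                 (FAnd (Lit 2 false) (FOr (Lit 0 true) (Lit 1 false))))).

Lemma L_le_A : L_le 4 bA 10.
Proof.
exists formula_A; split=> //; split=> // x.
by rewrite /bA /=; case: (x 0); case: (x 1); case: (x 2); case: (x 3).
Qed.

Theorem mainTheorem17 : forall d : nat, 1 <= d -> L_le (4 ^ d) (iter_bf 4 bA d) (10 ^ d).
Proof. by move=> d _; apply: L_le_iter L_le_A. Qed.
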